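(* Let $X\in\mathbb{R}^{n\times p}$, $Y\in\mathbb{R}^{n\times q}$, $\lambda>0$. Let $(\hat B,\hat S)$ be either (a) a minimizer over $B\in\mathbb{R}^{p\times q}$ and symmetric positive definite $S\in\mathbb{R}^{n\times n}$ of $\frac{1}{2nq}\operatorname{Tr}((Y-XB)^\top S^{-1}(Y-XB))+\frac{1}{2n}\operatorname{Tr}(S)+\lambda\|B\|_{2,1}$; or (b) for given $0<\sigma_{\min}<\sigma_{\max}$, a minimizer over $B\in\mathbb{R}^{p\times q}$ and symmetric $S$ with $\sigma_{\max}\mathrm{Id}_n\succeq S\succeq\sigma_{\min}\mathrm{Id}_n$ of $\frac{1}{2nq}\operatorname{Tr}((Y-XB)^\top S^{-1}(Y-XB))+\frac{\operatorname{Tr}S}{2n}+\lambda\|B\|_{2,1}$. Let $\hat E=Y-X\hat B$. Then $$\|X^\top\hat E\|_{2,\infty}\le\|\hat S\|_2\,\|X^\top\hat S^{-1}\hat E\|_{2,\infty}.$$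
   Context: $\|M\|_{2,\infty}=\max_j\|M_{j:}\|_2$ is the maximum Euclidean norm of the rows of $M$; $\|\cdot\|_2$ is the operator (spectral) norm; $\succeq$ is the Loewner order. *)

From HB Require Import structures.
From mathcomp Require Import all_boot all_order all_algebra.
From mathcomp Require Import classical_sets reals.
Set Implicit Arguments. Unset Strict Implicit. Unset Printing Implicit Defensive.
Import Order.TTheory GRing.Theory Num.Theory.
Local Open Scope ring_scope.
Local Open Scope classical_set_scope.

Section Defs.
Variable R : realType.

Definition vnorm k (v : 'cV[R]_k) : R := Num.sqrt (\sum_i v i 0 ^+ 2).

Definition rownorm m k (M : 'M[R]_(m, k)) (j : 'I_m) : R :=
  Num.sqrt (\sum_i M j i ^+ 2).

Definition norm21 m k (M : 'M[R]_(m, k)) : R := \sum_j rownorm M j.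

Definition norm2inf m k (M : 'M[R]_(m, k)) : R :=
  \big[Num.max/0]_j rownorm M j.

Definition opnorm m k (M : 'M[R]_(m, k)) : R :=
  sup [set vnorm (M *m v) | v in [set v : 'cV[R]_k | vnorm v <= 1]].

Definition symmetric n (S : 'M[R]_n) : Prop := S^T = S.

Definition spd n (S : 'M[R]_n) : Prop :=
  symmetric S /\ forall v : 'cV[R]_n, v != 0 -> 0 < (v^T *m S *m v) 0 0.

Definition loewner_ge n (A B : 'M[R]_n) : Prop :=
  forall v : 'cV[R]_n, 0 <= (v^T *m (A - B) *m v) 0 0.

Definition objective n p q (X : 'M[R]_(n, p)) (Y : 'M[R]_(n, q)) (lam : R)
    (B : 'M[R]_(p, q)) (S : 'M[R]_n) : R :=
  (2 * n * q)%:R^-1 * \tr ((Y - X *m B)^T *m invmx S *m (Y - X *m B))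
  + (2 * n)%:R^-1 * \tr S + lam * norm21 B.

Definition feas_a n (S : 'M[R]_n) : Prop := spd S.

Definition feas_b n (smin smax : R) (S : 'M[R]_n) : Prop :=
  symmetric S /\ loewner_ge (smax%:M) S /\ loewner_ge S (smin%:M).

Definition minimizer n p q (X : 'M[R]_(n, p)) (Y : 'M[R]_(n, q)) (lam : R)
    (feas : 'M[R]_n -> Prop) (Bh : 'M[R]_(p, q)) (Sh : 'M[R]_n) : Prop :=
  feas Sh /\ forall B S, feas S -> objective X Y lam Bh Sh <= objective X Y lam B S.

End Defs.

From HB Require Import structures.
From mathcomp Require Import all_boot all_order all_algebra.
From mathcomp Require Import classical_sets reals.
From mathcomp Require Import ring lra.
Import Order.TTheory GRing.Theory Num.Theory.
Local Open Scope ring_scope.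
Set Implicit Arguments. Unset Strict Implicit. Unset Printing Implicit Defensive.

(* Write E = Y - X B̂, M = E Eᵀ and T = Ŝ⁻¹.  Conjugating S by an orthogonal Q
   preserves both feasible sets and Tr S, and turns the data-fit term into
   Tr (M Q T Qᵀ) / (2nq).  Along the rotations Q_s of a coordinate plane (i, j)
   this is Tr (M T) + s (N_ji - N_ij) + O(s²), where N = T M - M T is
   skew-symmetric, so minimality of Ŝ forces N = 0: T, hence Ŝ, commutes with M.
   Row j of Xᵀ E is Eᵀ x and row j of Xᵀ Ŝ⁻¹ E is Eᵀ y, where x = Ŝ y is
   column j of X, so it suffices that |Eᵀ Ŝ y| <= ‖Ŝ‖ |Eᵀ y|.  Since Ŝ is
   symmetric and commutes with E Eᵀ, Cauchy-Schwarz makes a_k = |Eᵀ Ŝᵏ y|²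
   log-convex, while a_k = O(‖Ŝ‖^2k); the ratios a_(k+1) / a_k increase, so
   a_1 <= ‖Ŝ‖² a_0.  This avoids diagonalising Ŝ and M simultaneously. *)

Section ConcomitantEstimator.
Variable R : realType.

(** * Euclidean and operator norms *)

Definition dotv k (u w : 'cV[R]_k) : R := \sum_i u i 0 * w i 0.

Lemma dotvE k (u w : 'cV[R]_k) : (u^T *m w) 0 0 = dotv u w.
Proof. by rewrite mxE; apply: eq_bigr => i _; rewrite mxE. Qed.

Lemma dotvZ k (a b : R) (u w : 'cV[R]_k) :
  dotv (a *: u) (b *: w) = a * b * dotv u w.
Proof. by rewrite /dotv mulr_sumr; apply: eq_bigr => i _; rewrite !mxE; ring. Qed.

Lemma dotv_ge0 k (v : 'cV[R]_k) : 0 <= dotv v v.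
Proof. by apply: sumr_ge0 => i _; rewrite -expr2 sqr_ge0. Qed.

Lemma dotv_eq0 k (v : 'cV[R]_k) : (dotv v v == 0) = (v == 0).
Proof.
rewrite psumr_eq0; last by move=> i _; rewrite -expr2 sqr_ge0.
apply/allP/eqP => [v0|-> i _]; last by rewrite /= mxE mul0r.
apply/matrixP => i j; rewrite ord1 mxE.
by have /= := v0 i (mem_index_enum i); rewrite -expr2 sqrf_eq0 => /eqP.
Qed.

Lemma dotv_gt0 k (v : 'cV[R]_k) : v != 0 -> 0 < dotv v v.
Proof. by rewrite lt_def dotv_eq0 dotv_ge0 andbT. Qed.

Lemma dotv_sqr_le k (u w : 'cV[R]_k) : dotv u w ^+ 2 <= dotv u u * dotv w w.
Proof.
have [w0|] := eqVneq w 0.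
  have dotv0 x : dotv x 0 = 0 by rewrite /dotv big1 // => i _; rewrite mxE mulr0.
  by rewrite w0 !dotv0 expr0n mulr0.
move=> /dotv_gt0 wpos.
have expand x y : \sum_i (x * u i 0 - y * w i 0) ^+ 2 =
    x ^+ 2 * dotv u u - x * y * 2 * dotv u w + y ^+ 2 * dotv w w.
  by rewrite /dotv !mulr_sumr -sumrB -big_split /=; apply: eq_bigr => i _; ring.
have : 0 <= \sum_i (dotv w w * u i 0 - dotv u w * w i 0) ^+ 2.
  by apply: sumr_ge0 => i _; exact: sqr_ge0.
rewrite expand; nra.
Qed.

Lemma vnormE k (v : 'cV[R]_k) : vnorm v = Num.sqrt (dotv v v).
Proof. by rewrite /vnorm; congr Num.sqrt; apply: eq_bigr => i _; rewrite expr2. Qed.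

Lemma vnorm_ge0 k (v : 'cV[R]_k) : 0 <= vnorm v.
Proof. exact: sqrtr_ge0. Qed.

Lemma vnorm_sqr k (v : 'cV[R]_k) : vnorm v ^+ 2 = dotv v v.
Proof. by rewrite vnormE sqr_sqrtr ?dotv_ge0. Qed.

Lemma vnorm_eq0 k (v : 'cV[R]_k) : (vnorm v == 0) = (v == 0).
Proof. by rewrite vnormE sqrtr_eq0 le_eqVlt ltNge dotv_ge0 orbF dotv_eq0. Qed.

Lemma vnorm0 k : vnorm (0 : 'cV[R]_k) = 0.
Proof. by apply/eqP; rewrite vnorm_eq0. Qed.

Lemma vnormZ k (a : R) (v : 'cV[R]_k) : vnorm (a *: v) = `|a| * vnorm v.
Proof. by rewrite !vnormE dotvZ -expr2 sqrtrM ?sqr_ge0 // sqrtr_sqr. Qed.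

Lemma dotv_mulmx_le m k (M : 'M[R]_(m, k)) (v : 'cV[R]_k) :
  dotv (M *m v) (M *m v) <= (\sum_i dotv (row i M)^T (row i M)^T) * dotv v v.
Proof.
rewrite mulr_suml; apply: ler_sum => i _; rewrite -expr2.
have -> : (M *m v) i 0 = dotv (row i M)^T v.
  by rewrite mxE; apply: eq_bigr => j _; rewrite !mxE.
exact: dotv_sqr_le.
Qed.

Lemma opnorm_has_ubound m k (M : 'M[R]_(m, k)) :
  has_ubound [set vnorm (M *m v) | v in [set v : 'cV[R]_k | vnorm v <= 1]].
Proof.
set F := \sum_i dotv (row i M)^T (row i M)^T.
have F0 : 0 <= F by apply: sumr_ge0 => i _; exact: dotv_ge0.
exists (Num.sqrt F) => _ [v /= v1 <-]; rewrite vnormE ler_sqrt //.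
apply: (le_trans (dotv_mulmx_le M v)); rewrite ler_piMr // -vnorm_sqr.
by rewrite expr_le1 ?vnorm_ge0.
Qed.

Lemma opnorm_ge0 m k (M : 'M[R]_(m, k)) : 0 <= opnorm M.
Proof.
apply: (ub_le_sup (opnorm_has_ubound M)).
by exists 0; rewrite /= ?mulmx0 vnorm0 // ler01.
Qed.

Lemma opnorm_mulmx_le m k (M : 'M[R]_(m, k)) (v : 'cV[R]_k) :
  vnorm (M *m v) <= opnorm M * vnorm v.
Proof.
have [->|v0] := eqVneq v 0; first by rewrite mulmx0 !vnorm0 mulr0.
have vpos : 0 < vnorm v by rewrite lt_def vnorm_eq0 v0 vnorm_ge0.
have unit_v : vnorm ((vnorm v)^-1 *: v) <= 1.
  by rewrite vnormZ ger0_norm ?invr_ge0 ?vnorm_ge0 // mulVf ?gt_eqF.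
have : vnorm (M *m ((vnorm v)^-1 *: v)) <= opnorm M.
  by apply: (ub_le_sup (opnorm_has_ubound M)); exists ((vnorm v)^-1 *: v).
by rewrite -scalemxAr vnormZ ger0_norm ?invr_ge0 ?vnorm_ge0 // ler_pdivrMl // mulrC.
Qed.

(** * Log-convex sequences *)

Lemma bernoulli_le (e : R) k : 0 <= e -> 1 + k%:R * e <= (1 + e) ^+ k.
Proof.
move=> e0; elim: k => [|k IH]; first by rewrite mul0r addr0 expr0.
have : 0 <= k%:R * e by rewrite mulr_ge0.
rewrite exprS -natr1; nra.
Qed.

Lemma geometric_le (a r d C : R) : 0 < a -> 0 <= d ->
  (forall k, a * r ^+ k <= C * d ^+ k) -> r <= d.
Proof.
move=> a0 d0 bound; have [d_eq0|d_neq0] := eqVneq d 0.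
  by have := bound 1%N; rewrite d_eq0 !expr1 mulr0 pmulr_rle0.
have d_gt0 : 0 < d by rewrite lt_def d_neq0.
rewrite leNgt; apply/negP => d_lt_r.
set e := r / d - 1.
have e_gt0 : 0 < e by rewrite subr_gt0 ltr_pdivlMr // mul1r.
have ratio_bound k : a * (1 + e) ^+ k <= C.
  by rewrite addrC subrK expr_div_n mulrA ler_pdivrMr ?exprn_gt0.
have C_ge0 : 0 <= C by have := ratio_bound 0%N; rewrite expr0 mulr1; lra.
have K_ge0 : 0 <= C / (a * e) by rewrite divr_ge0 // ltW ?mulr_gt0.
have := archi_boundP K_ge0; set k := Num.bound _ => k_big.
have : a * (1 + k%:R * e) <= C.
  by apply: le_trans (ratio_bound k); rewrite ler_pM2l // bernoulli_le // ltW.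
move: k_big; rewrite ltr_pdivrMr ?mulr_gt0 //; nra.
Qed.

Lemma logconvex_geometric (a : nat -> R) : 0 < a 0%N -> 0 < a 1%N ->
  (forall k, a k.+1 ^+ 2 <= a k * a k.+2) ->
  forall k, a 0%N * (a 1%N / a 0%N) ^+ k <= a k.
Proof.
move=> a0 a1 logconvex.
have a_gt0 k : 0 < a k /\ 0 < a k.+1.
  elim: k => [|k [ak ak1]] //; split=> //.
  by rewrite -(pmulr_rgt0 _ ak) (lt_le_trans _ (logconvex k)) ?exprn_gt0.
set rho := a 1%N / a 0%N.
have ratio_step k : rho * a k <= a k.+1.
  elim: k => [|k IH]; first by rewrite mulfVK ?gt_eqF.
  have [ak ak1] := a_gt0 k.
  rewrite -(ler_pM2l ak) mulrCA (le_trans _ (logconvex k)) // expr2.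
  by rewrite mulrA ler_pM2r.
elim=> [|k IH]; first by rewrite mulr1.
apply: le_trans (ratio_step k); rewrite exprS mulrCA ler_pM2l //.
by rewrite divr_gt0.
Qed.

Lemma logconvex_le (a : nat -> R) (d C : R) : 0 <= d -> (forall k, 0 <= a k) ->
  (forall k, a k.+1 ^+ 2 <= a k * a k.+2) -> (forall k, a k <= C * d ^+ k) ->
  a 1%N <= d * a 0%N.
Proof.
move=> d0 a_ge0 logconvex bound.
have [a1_eq0|a1_neq0] := eqVneq (a 1%N) 0; first by rewrite a1_eq0 mulr_ge0.
have a1 : 0 < a 1%N by rewrite lt_def a1_neq0 a_ge0.
have a0 : 0 < a 0%N.
  rewrite lt_def a_ge0 andbT; apply: contra_neq a1_neq0 => a0_eq0.
  by apply/eqP; rewrite -sqrf_eq0 eq_le sqr_ge0 andbT -(mul0r (a 2)) -a0_eq0.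
have := geometric_le a0 d0 (fun k => le_trans (logconvex_geometric a0 a1 logconvex k) (bound k)).
by rewrite ler_pdivrMr // mulrC.
Qed.

(** * Matrices commuting with E E^T *)

Lemma dotv_trmx_mul k m (E : 'M[R]_(k, m)) (x y : 'cV[R]_k) :
  dotv (E^T *m x) (E^T *m y) = (x^T *m (E *m E^T) *m y) 0 0.
Proof. by rewrite -dotvE trmx_mul trmxK !mulmxA. Qed.

Lemma vnorm_iter_mulmx_le k (S : 'M[R]_k) (y : 'cV[R]_k) j :
  vnorm (iter j (mulmx S) y) <= opnorm S ^+ j * vnorm y.
Proof.
elim: j => [|j IH]; first by rewrite expr0 mul1r.
apply: le_trans (opnorm_mulmx_le S _) _.
by rewrite exprS -mulrA ler_wpM2l ?opnorm_ge0.
Qed.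

Lemma vnorm_trmx_mul_comm k m (E : 'M[R]_(k, m)) (S : 'M[R]_k) (y : 'cV[R]_k) :
  S^T = S -> comm_mx S (E *m E^T) ->
  vnorm (E^T *m (S *m y)) <= opnorm S * vnorm (E^T *m y).
Proof.
move=> S_sym; set M := E *m E^T => SM.
pose v j := iter j (mulmx S) y.
pose a j := dotv (E^T *m v j) (E^T *m v j).
have logconvex j : a j.+1 ^+ 2 <= a j * a j.+2.
  suff -> : a j.+1 = dotv (E^T *m v j) (E^T *m v j.+2) by exact: dotv_sqr_le.
  rewrite /a !dotv_trmx_mul -/M /= trmx_mul S_sym; clearbody M.
  by rewrite !mulmxA -(mulmxA _ S M) SM !mulmxA.
set c := opnorm S; set C := (opnorm E^T * vnorm y) ^+ 2.
have growth j : a j <= C * (c ^+ 2) ^+ j.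
  rewrite /a -vnorm_sqr /C exprAC -exprMn.
  rewrite (@ler_pXn2r _ 2) ?nnegrE ?mulr_ge0 ?exprn_ge0 ?opnorm_ge0 ?vnorm_ge0 //.
  apply: le_trans (opnorm_mulmx_le _ _) _.
  by rewrite -mulrA ler_wpM2l ?opnorm_ge0 // mulrC vnorm_iter_mulmx_le.
have := logconvex_le (sqr_ge0 c) (fun j => dotv_ge0 _) logconvex growth.
rewrite /a /= -!vnorm_sqr -exprMn.
by rewrite (@ler_pXn2r _ 2) ?nnegrE ?mulr_ge0 ?vnorm_ge0 ?opnorm_ge0.
Qed.

Lemma rownormE m k (A : 'M[R]_(m, k)) j : rownorm A j = vnorm (row j A)^T.
Proof. by congr Num.sqrt; apply: eq_bigr => i _; rewrite !mxE. Qed.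

Lemma norm2inf_le_scale m k l (A : 'M[R]_(m, k)) (B : 'M[R]_(m, l)) (c : R) :
  0 <= c -> (forall j, rownorm A j <= c * rownorm B j) ->
  norm2inf A <= c * norm2inf B.
Proof.
move=> c0 AB; apply: bigmax_le => [|j _]; first by rewrite mulr_ge0 ?bigmax_ge_id.
by apply: le_trans (AB j) _; rewrite ler_wpM2l // le_bigmax.
Qed.

Lemma comm_mx_invmx k (S M : 'M[R]_k) :
  S \in unitmx -> comm_mx (invmx S) M -> comm_mx S M.
Proof.
move=> S_unit TM; rewrite /comm_mx -{1}(mulmxKV S_unit M) -TM.
by rewrite !mulmxA mulmxV // mul1mx.
Qed.

Lemma norm2inf_mulmx_le n p q (X : 'M[R]_(n, p)) (E : 'M[R]_(n, q)) (S : 'M[R]_n) :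
  S^T = S -> S \in unitmx -> comm_mx (invmx S) (E *m E^T) ->
  norm2inf (X^T *m E) <= opnorm S * norm2inf (X^T *m invmx S *m E).
Proof.
move=> S_sym S_unit TM; apply: norm2inf_le_scale => [|j]; first exact: opnorm_ge0.
rewrite !rownormE !row_mul !trmx_mul trmx_inv S_sym -tr_col trmxK.
rewrite -{1}(mulKVmx S_unit (col j X)).
by apply: vnorm_trmx_mul_comm => //; exact: comm_mx_invmx.
Qed.

(** * First-order optimality along plane rotations *)

Lemma linear_term_eq0 (L K : R) (P : R -> R) :
  (forall s, s ^+ 2 <= 1 -> `|P s| <= K * s ^+ 2) ->
  (forall s, s ^+ 2 <= 1 -> 0 <= s * L + P s) -> L = 0.
Proof.
move=> P_small P_nonneg.
have K0 : 0 <= K.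
  by have := P_small 1; rewrite expr1n mulr1 lexx => /(_ isT); apply: le_trans.
set D := `|L| + K + 1.
have D_gt0 : 0 < D by rewrite /D; have := normr_ge0 L; lra.
set x := L / D.
have L_eq : L = x * D by rewrite /x divfK ?gt_eqF.
have x_sqr : x ^+ 2 <= 1.
  have : `|x| <= 1.
    rewrite /x normrM normfV (gtr0_norm D_gt0) ler_pdivrMr // mul1r /D; lra.
  by rewrite ler_norml; nra.
have := P_nonneg (- x); have := P_small (- x).
rewrite sqrrN => /(_ x_sqr) /ler_normlW Pb /(_ x_sqr).
rewrite L_eq /D => h.
have x0 : x = 0.
  apply/eqP; rewrite -sqrf_eq0 eq_le sqr_ge0 andbT.
  have : x ^+ 2 * (`|L| + 1) <= 0 by nra.
  by rewrite pmulr_lle0 //; have := normr_ge0 L; lra.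
by rewrite L_eq x0 mul0r.
Qed.

Definition vers (s : R) := 1 - Num.sqrt (1 - s ^+ 2).

Lemma vers_ge0 s : 0 <= vers s.
Proof. by rewrite subr_ge0 -[leRHS]sqrtr1 ler_sqrt ?ler01 // gerDl oppr_le0 sqr_ge0. Qed.

Lemma vers_le_sqr s : s ^+ 2 <= 1 -> vers s <= s ^+ 2.
Proof.
rewrite -subr_ge0 => s1; have := sqr_sqrtr s1; have := sqrtr_ge0 (1 - s ^+ 2).
rewrite /vers; nra.
Qed.

Lemma vers_sqr s : s ^+ 2 <= 1 -> s ^+ 2 + vers s ^+ 2 = 2 * vers s.
Proof.
rewrite -subr_ge0 => s1; have := sqr_sqrtr s1.
rewrite /vers; set c := Num.sqrt _ => c2; nra.
Qed.

Lemma mxtrace_conj_expand k (M T A B : 'M[R]_k) (s v : R) :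
  let Q := 1%:M + s *: A - v *: B in
  \tr (M *m (Q *m T *m Q^T)) = \tr (M *m T) + s * \tr (M *m (A *m T + T *m A^T))
    + (- v * \tr (M *m (B *m T + T *m B^T)) + s ^+ 2 * \tr (M *m (A *m T *m A^T))
       - s * v * \tr (M *m (A *m T *m B^T + B *m T *m A^T))
       + v ^+ 2 * \tr (M *m (B *m T *m B^T))).
Proof.
rewrite /= !linearD !linearN !linearZ /= trmx1.
rewrite ?(mulmxDl, mulmxDr, mulmxN, mulNmx, mulmxBl, mulmxBr, mul1mx, mulmx1).
rewrite -?(scalemxAl, scalemxAr) ?(mulmxN, mulNmx, scalerN) -?scaleNr.
by rewrite !mxtraceD !mxtraceZ !mulmxA; ring.
Qed.

Lemma mxtrace_delta_mul k (a b : 'I_k) (N : 'M[R]_k) : \tr (delta_mx a b *m N) = N b a.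
Proof.
rewrite /mxtrace (bigD1 a) //= big1 => [|c /negbTE ca]; last first.
  by rewrite mxE big1 // => d _; rewrite mxE ca mul0r.
rewrite mxE (bigD1 b) //= big1 => [|d /negbTE db]; last by rewrite mxE db andbF mul0r.
by rewrite mxE !eqxx mul1r !addr0.
Qed.

Definition orthomx k (Q : 'M[R]_k) : Prop := Q *m Q^T = 1%:M.

Section PlaneRotation.
Variables (k : nat) (i j : 'I_k).
Hypothesis neq_ij : i != j.

Definition rot_gen : 'M[R]_k := delta_mx i j - delta_mx j i.
Definition rot_proj : 'M[R]_k := delta_mx i i + delta_mx j j.

(* Rotation of angle [asin s] in the [(i, j)] coordinate plane. *)
Definition plane_rot (s : R) : 'M[R]_k := 1%:M + s *: rot_gen - vers s *: rot_proj.

Lemma trmx_rot_gen : rot_gen^T = - rot_gen.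
Proof. by rewrite /rot_gen linearB /= !trmx_delta opprB. Qed.

Lemma trmx_rot_proj : rot_proj^T = rot_proj.
Proof. by rewrite /rot_proj linearD /= !trmx_delta. Qed.

Lemma trmx_plane_rot s :
  (plane_rot s)^T = 1%:M - s *: rot_gen - vers s *: rot_proj.
Proof.
by rewrite linearB linearD !linearZ /= trmx1 trmx_rot_gen trmx_rot_proj scalerN.
Qed.

Let neq_ji : (j == i) = false. Proof. by rewrite eq_sym (negbTE neq_ij). Qed.

Lemma rot_gen_sqr : rot_gen *m rot_gen = - rot_proj.
Proof.
rewrite /rot_gen /rot_proj !mulmxBl !mulmxBr !mul_delta_mx_cond !eqxx (negbTE neq_ij) neq_ji.
by apply/matrixP => a b; rewrite !mxE; ring.
Qed.

Lemma rot_gen_proj : rot_gen *m rot_proj = rot_gen.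
Proof.
rewrite /rot_gen /rot_proj mulmxBl !mulmxDr !mul_delta_mx_cond !eqxx (negbTE neq_ij) neq_ji.
by apply/matrixP => a b; rewrite !mxE; ring.
Qed.

Lemma rot_proj_gen : rot_proj *m rot_gen = rot_gen.
Proof.
rewrite /rot_gen /rot_proj mulmxDl !mulmxBr !mul_delta_mx_cond !eqxx (negbTE neq_ij) neq_ji.
by apply/matrixP => a b; rewrite !mxE; ring.
Qed.

Lemma rot_proj_idem : rot_proj *m rot_proj = rot_proj.
Proof.
rewrite /rot_proj mulmxDl !mulmxDr !mul_delta_mx_cond !eqxx (negbTE neq_ij) neq_ji.
by apply/matrixP => a b; rewrite !mxE; ring.
Qed.

Lemma plane_rot_orthomx s : s ^+ 2 <= 1 -> orthomx (plane_rot s).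
Proof.
move=> s1; rewrite /orthomx trmx_plane_rot /plane_rot.
rewrite ?(mulmxDl, mulmxDr, mulmxN, mulNmx, mulmxBl, mulmxBr, mul1mx, mulmx1).
rewrite -?(scalemxAl, scalemxAr) ?(mulmxN, mulNmx, scalerN).
rewrite rot_gen_sqr rot_gen_proj rot_proj_gen rot_proj_idem ?scalerN ?opprK.
have := vers_sqr s1; set v := vers s => vs.
move: (rot_gen) (rot_proj) => G P; apply/matrixP => a b; rewrite !mxE.
have : (s ^+ 2 + v ^+ 2 - 2 * v) * P a b = 0 by rewrite vs subrr mul0r.
lra.
Qed.

Lemma mxtrace_rot_gen (N : 'M[R]_k) : \tr (rot_gen *m N) = N j i - N i j.
Proof. by rewrite /rot_gen mulmxBl linearB /= !mxtrace_delta_mul. Qed.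

End PlaneRotation.

Lemma vers_remainder_le (K1 K2 K3 K4 s : R) : s ^+ 2 <= 1 ->
  `|- vers s * K1 + s ^+ 2 * K2 - s * vers s * K3 + vers s ^+ 2 * K4|
    <= (`|K1| + `|K2| + `|K3| + `|K4|) * s ^+ 2.
Proof.
move=> s1; have v0 := vers_ge0 s; have vs := vers_le_sqr s1.
have small t x : `|t| <= s ^+ 2 -> `|t * x| <= `|x| * s ^+ 2.
  by move=> ht; rewrite normrM mulrC ler_wpM2l.
rewrite !mulrDl.
apply: le_trans (ler_normD _ _) _; apply: lerD.
  apply: le_trans (ler_normB _ _) _; apply: lerD.
    apply: le_trans (ler_normD _ _) _; apply: lerD; apply: small.
      by rewrite normrN ger0_norm.
    by rewrite ger0_norm ?sqr_ge0.
  apply: small; rewrite normrM (ger0_norm v0) (le_trans _ vs) // ler_piMl //.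
  by rewrite -(@expr_le1 _ 2) // -normrX ger0_norm ?sqr_ge0.
apply: small; rewrite ger0_norm ?exprn_ge0 // (le_trans _ vs) // expr2 ler_piMl //.
exact: le_trans vs s1.
Qed.

Lemma mxtrace_skew_conj k (M T G : 'M[R]_k) : G^T = - G ->
  \tr (M *m (G *m T + T *m G^T)) = \tr (G *m (T *m M - M *m T)).
Proof.
move=> G_skew; rewrite G_skew mulmxN mulmxDr mulmxN !linearD !linearN /=.
by congr (_ - _); [rewrite mxtrace_mulC | rewrite [RHS]mxtrace_mulC]; rewrite !mulmxA.
Qed.

Lemma comm_mx_of_trace_min k (T M : 'M[R]_k) : T^T = T -> M^T = M ->
  (forall Q, orthomx Q -> \tr (M *m T) <= \tr (M *m (Q *m T *m Q^T))) ->
  comm_mx T M.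
Proof.
move=> T_sym M_sym trace_min.
set N := T *m M - M *m T.
have N_skew a b : N a b = - N b a.
  have : N^T = - N by rewrite /N linearB /= !trmx_mul T_sym M_sym opprB.
  by move/matrixP/(_ b a); rewrite !mxE.
suff N0 : N = 0 by apply/eqP; rewrite -subr_eq0 -/N N0.
apply/matrixP => a b; rewrite [RHS]mxE.
have [<-|neq_ab] := eqVneq a b; first by have := N_skew a a; lra.
suff : N b a - N a b = 0 by have := N_skew a b; lra.
rewrite -(mxtrace_rot_gen a b) -(mxtrace_skew_conj M T (trmx_rot_gen a b)).
set G := rot_gen a b; set P := rot_proj a b.
set K1 := \tr (M *m (P *m T + T *m P^T)); set K2 := \tr (M *m (G *m T *m G^T)).
set K3 := \tr (M *m (G *m T *m P^T + P *m T *m G^T)); set K4 := \tr (M *m (P *m T *m P^T)).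
apply: (linear_term_eq0 (K := `|K1| + `|K2| + `|K3| + `|K4|)
  (P := fun s => - vers s * K1 + s ^+ 2 * K2 - s * vers s * K3 + vers s ^+ 2 * K4)).
  by move=> s s1; exact: vers_remainder_le.
move=> s s1; have := trace_min _ (plane_rot_orthomx neq_ab s1).
rewrite /plane_rot mxtrace_conj_expand -/G -/P -/K1 -/K2 -/K3 -/K4; lra.
Qed.

(** * Orthogonal invariance of the problem *)

Section OrthogonalConjugation.
Variables (k : nat) (Q : 'M[R]_k).
Hypothesis Q_orth : orthomx Q.

Lemma quad_conj (S : 'M[R]_k) (v : 'cV[R]_k) :
  (v^T *m (Q *m S *m Q^T) *m v) 0 0 = ((Q^T *m v)^T *m S *m (Q^T *m v)) 0 0.
Proof. by rewrite trmx_mul trmxK !mulmxA. Qed.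

Lemma loewner_ge_conj (A B : 'M[R]_k) :
  loewner_ge A B -> loewner_ge (Q *m A *m Q^T) (Q *m B *m Q^T).
Proof. by move=> AB v; rewrite -mulmxBl -mulmxBr quad_conj. Qed.

Lemma scalar_mx_conj (a : R) : Q *m a%:M *m Q^T = a%:M.
Proof. by rewrite mul_mx_scalar -scalemxAl Q_orth scalemx1. Qed.

Lemma trmx_conj (S : 'M[R]_k) : S^T = S -> (Q *m S *m Q^T)^T = Q *m S *m Q^T.
Proof. by move=> S_sym; rewrite !trmx_mul trmxK S_sym mulmxA. Qed.

Lemma spd_conj (S : 'M[R]_k) : spd S -> spd (Q *m S *m Q^T).
Proof.
move=> [S_sym S_pos]; split=> [|v v0]; first exact: trmx_conj.
rewrite quad_conj S_pos //; apply: contraNneq v0 => Qv0.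
by rewrite -(mul1mx v) -Q_orth -mulmxA Qv0 mulmx0.
Qed.

Lemma feas_b_conj (smin smax : R) (S : 'M[R]_k) :
  feas_b smin smax S -> feas_b smin smax (Q *m S *m Q^T).
Proof.
move=> [S_sym [S_le S_ge]]; split; first exact: trmx_conj.
by rewrite -(scalar_mx_conj smax) -(scalar_mx_conj smin); split; exact: loewner_ge_conj.
Qed.

Lemma invmx_conj (S : 'M[R]_k) : S \in unitmx -> invmx (Q *m S *m Q^T) = Q *m invmx S *m Q^T.
Proof.
move=> S_unit.
have inv : Q *m S *m Q^T *m (Q *m invmx S *m Q^T) = 1%:M.
  rewrite !mulmxA -(mulmxA _ Q^T Q) (mulmx1C Q_orth) mulmx1.
  by rewrite -(mulmxA _ S) mulmxV // mulmx1.
have [QSQ_unit _] := mulmx1_unit inv.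
by rewrite -[LHS]mulmx1 -inv mulKmx.
Qed.

Lemma mxtrace_conj (S : 'M[R]_k) : \tr (Q *m S *m Q^T) = \tr S.
Proof. by rewrite mxtrace_mulC mulmxA (mulmx1C Q_orth) mul1mx. Qed.

End OrthogonalConjugation.

Lemma spd_unitmx k (S : 'M[R]_k) : spd S -> S \in unitmx.
Proof.
move=> [_ S_pos]; rewrite unitmxE unitfE; apply/negP => /det0P [v v0 vS].
by have := S_pos v^T; rewrite trmx_eq0 trmxK vS mul0mx mxE ltxx => /(_ v0).
Qed.

Lemma feas_b_spd k (smin smax : R) (S : 'M[R]_k) :
  0 < smin -> feas_b smin smax S -> spd S.
Proof.
move=> smin_gt0 [S_sym [_ S_ge]]; split=> // v v0; have := S_ge v.
rewrite mulmxBr mulmxBl mul_mx_scalar -scalemxAl [X in 0 <= X]mxE [X in _ + X]mxE.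
rewrite [X in _ - X]mxE dotvE subr_ge0.
by apply: lt_le_trans; rewrite mulr_gt0 ?dotv_gt0.
Qed.

Lemma mulmx_trmx_eq0 n q (E : 'M[R]_(n, q)) : (n * q = 0)%N -> E *m E^T = 0.
Proof.
move=> /eqP; rewrite muln_eq0 => nq0; apply/matrixP => a b; rewrite !mxE big1 // => c _.
by case/orP: nq0 => /eqP n0; [move: (ltn_ord a) | move: (ltn_ord c)]; rewrite [X in (_ < X)%N]n0.
Qed.

Lemma mxtrace_trmx_conj n q (E : 'M[R]_(n, q)) (Z : 'M[R]_n) :
  \tr (E^T *m Z *m E) = \tr (E *m E^T *m Z).
Proof. by rewrite mxtrace_mulC !mulmxA. Qed.

Section Minimizer.
Variables (n p q : nat) (X : 'M[R]_(n, p)) (Y : 'M[R]_(n, q)) (lam : R).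
Variables (feas : 'M[R]_n -> Prop) (Bh : 'M[R]_(p, q)) (Sh : 'M[R]_n).
Hypothesis Sh_min : minimizer X Y lam feas Bh Sh.
Hypothesis Sh_spd : spd Sh.
Hypothesis feas_conj : forall Q, orthomx Q -> feas (Q *m Sh *m Q^T).

Let E := Y - X *m Bh.

Lemma minimizer_trace_le Q : (0 < n * q)%N -> orthomx Q ->
  \tr (E *m E^T *m invmx Sh) <= \tr (E *m E^T *m (Q *m invmx Sh *m Q^T)).
Proof.
move=> nq_gt0 Q_orth; have := Sh_min.2 Bh _ (feas_conj Q_orth).
rewrite /objective invmx_conj ?spd_unitmx // mxtrace_conj // -/E.
rewrite !mxtrace_trmx_conj !lerD2r ler_pM2l // invr_gt0 ltr0n.
by rewrite -mulnA muln_gt0.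
Qed.

Lemma minimizer_comm_mx : comm_mx (invmx Sh) (E *m E^T).
Proof.
have [/mulmx_trmx_eq0 ->|nq_gt0] := posnP (n * q); first exact: comm_mx0.
have [Sh_sym _] := Sh_spd.
apply: comm_mx_of_trace_min => [||Q Q_orth].
- by rewrite trmx_inv Sh_sym.
- by rewrite trmx_mul trmxK.
- exact: minimizer_trace_le.
Qed.

Lemma minimizer_norm2inf_le :
  norm2inf (X^T *m E) <= opnorm Sh * norm2inf (X^T *m invmx Sh *m E).
Proof.
have [Sh_sym _] := Sh_spd.
by apply: norm2inf_mulmx_le => //; [exact: spd_unitmx | exact: minimizer_comm_mx].
Qed.

End Minimizer.

End ConcomitantEstimator.

Unset Implicit Arguments.

Theorem lemma3 (R : realType) (n p q : nat)
    (X : 'M[R]_(n, p)) (Y : 'M[R]_(n, q)) (lam : R) (hlam : 0 < lam)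
    (Bh : 'M[R]_(p, q)) (Sh : 'M[R]_n) :
  (minimizer X Y lam (@feas_a R n) Bh Sh \/
   exists smin smax : R, 0 < smin /\ smin < smax /\
     minimizer X Y lam (feas_b smin smax) Bh Sh) ->
  let Eh := Y - X *m Bh in
  norm2inf (X^T *m Eh) <= opnorm Sh * norm2inf (X^T *m invmx Sh *m Eh).
Proof.
move=> [Sh_min|[smin [smax [smin_gt0 [_ Sh_min]]]]].
  apply: (minimizer_norm2inf_le Sh_min Sh_min.1) => Q Q_orth.
  exact: spd_conj Q_orth _ Sh_min.1.
apply: (minimizer_norm2inf_le Sh_min (feas_b_spd smin_gt0 Sh_min.1)) => Q Q_orth.
exact: feas_b_conj Q_orth _ _ _ Sh_min.1.
Qed.
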